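(* Let $\mathbf{X}$ be a set of discrete random variables with sample space $\Omega(\mathbf{X})$, let $O$ be a positive unital circuit over $\mathbf{X}$ and let $\rho$ be a density matrix of the same size as $O(\mathbf{x})$. Then $p_{\mathbf{X}}(\mathbf{x})=\operatorname{Tr}[O(\mathbf{x})\rho]$ is a probability distribution on $\Omega(\mathbf{X})$, i.e. $p_{\mathbf{X}}(\mathbf{x})\ge 0$ for all $\mathbf{x}\in\Omega(\mathbf{X})$ and $\sum_{\mathbf{x}\in\Omega(\mathbf{X})}p_{\mathbf{X}}(\mathbf{x})=1$.
   Context: A density matrix is a PSD complex matrix of trace one. A POVM is a finite family of PSD matrices summing to the identity. A quantum operation from $d\times d$ to $d'\times d'$ matrices is $\Phi(A)=\sum_j K_jAK_j^*$ with $d'\times d$ matrices $K_j$, $\sum_jK_j^*K_j\le\mathbb{1}$ (Loewner order); it is unital if $\Phi(\mathbb{1}_d)=\mathbb{1}_{d'}$. A partition circuit over $\mathbf{X}=\{X_0,\dots,X_{N-1}\}$ is a rooted binary tree whose leaves are in bijection with the variables (leaf $k$ carries $X_k$ with finite sample space $\Omega(X_k)$), each internal unit $k$ having two children $k_l,k_r$; $\mathbf{x}_k$ denotes an assignment to the variables at the leaves below $k$. A positive unital circuit assigns to each leaf $k$ a POVM $\{E_{x_k}\}_{x_k\in\Omega(X_k)}$ and to each internal unit $k$ a unital quantum operation $\Phi_k$, and computes $O_k(\mathbf{x}_k)=E_{x_k}$ at leaves and $O_k(\mathbf{x}_k)=\Phi_k(O_{k_l}(\mathbf{x}_{k_l})\otimes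 O_{k_r}(\mathbf{x}_{k_r}))$ at internal units ($\otimes$ the Kronecker product); $O(\mathbf{x})=O_{\mathrm{root}}(\mathbf{x})$. *)

From HB Require Import structures.
From mathcomp Require Import all_boot all_order all_algebra.
From mathcomp Require Import complex mxtens.
From mathcomp Require Import reals.
Set Implicit Arguments.
Unset Strict Implicit.
Unset Printing Implicit Defensive.
Import Order.TTheory GRing.Theory Num.Theory.
Local Open Scope ring_scope.

Section Quantum.
Variable C : numClosedFieldType.

Definition adjmx m n (A : 'M[C]_(m, n)) : 'M[C]_(n, m) :=
  \matrix_(i, j) (A j i)^*.

Definition psd n (A : 'M[C]_n) : Prop :=
  adjmx A = A /\ forall v : 'cV[C]_n, 0 <= (adjmx v *m A *m v) 0 0.

Definition loewner n (A B : 'M[C]_n) : Prop := psd (B - A).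

Definition density n (rho : 'M[C]_n) : Prop := psd rho /\ \tr rho = 1.

Definition povm (T : finType) n (E : T -> 'M[C]_n) : Prop :=
  (forall x, psd (E x)) /\ \sum_(x : T) E x = 1%:M.

Definition kraus_apply d' d (K : seq 'M[C]_(d', d)) (A : 'M[C]_d) : 'M[C]_d' :=
  \sum_(M <- K) M *m A *m adjmx M.

Definition quantum_op d' d (K : seq 'M[C]_(d', d)) : Prop :=
  loewner (\sum_(M <- K) adjmx M *m M) 1%:M.

Definition unital_op d' d (K : seq 'M[C]_(d', d)) : Prop :=
  kraus_apply K 1%:M = 1%:M.

Variables (N : nat) (Om : 'I_N -> finType).

Definition assignment := {dffun forall k : 'I_N, Om k}.

(* partition circuit (rooted binary tree) with matrix-valued units;
   the index is the size of the output matrices of the unit *)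
Inductive circuit : nat -> Type :=
| CLeaf (d : nat) (k : 'I_N) (E : Om k -> 'M[C]_d) : circuit d
| CNode (d dl dr : nat) (K : seq 'M[C]_(d, dl * dr))
        (l : circuit dl) (r : circuit dr) : circuit d.

Fixpoint leaves d (t : circuit d) : seq 'I_N :=
  match t with
  | CLeaf _ k _ => [:: k]
  | CNode _ _ _ _ l r => leaves l ++ leaves r
  end.

Definition partition_circuit d (t : circuit d) : Prop :=
  perm_eq (leaves t) (enum 'I_N).

Fixpoint positive_unital d (t : circuit d) : Prop :=
  match t with
  | CLeaf _ k E => povm E
  | CNode _ _ _ K l r =>
      quantum_op K /\ unital_op K /\ positive_unital l /\ positive_unital r
  end.

Fixpoint circuit_eval d (t : circuit d) (x : assignment) : 'M[C]_d :=
  match t with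
  | CLeaf _ k E => E (x k)
  | CNode _ _ _ K l r => kraus_apply K (circuit_eval l x *t circuit_eval r x)
  end.

End Quantum.

(* Two facts make Tr(O(x) rho) a distribution: each O(x) is positive
   semidefinite and the O(x) sum to the identity.  Positivity propagates from
   the POVM elements at the leaves to the root, since Kronecker products and
   Kraus maps A |-> sum_j K_j A K_j^* preserve it, and Tr(A rho) >= 0 for PSD
   A and rho.  Normalisation propagates too: the two subtrees of a unit read
   disjoint sets of variables, so the sum over their joint assignments factors
   as (sum O_l) (x) (sum O_r) = 1 (x) 1 = 1, which a unital operation maps to 1. *)
From HB Require Import structures.
From mathcomp Require Import all_boot all_order all_algebra.
From mathcomp Require Import complex mxtens.
From mathcomp Require Import reals.
From mathcomp Require Import sesquilinear spectral.

Import Order.TTheory GRing.Theory Num.Theory.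
Local Open Scope ring_scope.

Section PositiveSemidefinite.
Set Implicit Arguments.
Unset Strict Implicit.
Unset Printing Implicit Defensive.
Local Open Scope sesquilinear_scope.

Variable C : numClosedFieldType.

Lemma adjmxE m n (A : 'M[C]_(m, n)) : adjmx A = A ^t*.
Proof. by apply/matrixP => i j; rewrite !mxE. Qed.

Lemma adjmxK m n (A : 'M[C]_(m, n)) : adjmx (adjmx A) = A.
Proof. by rewrite !adjmxE trmxCK. Qed.

Lemma adjmxM m n p (A : 'M[C]_(m, n)) (B : 'M[C]_(n, p)) :
  adjmx (A *m B) = adjmx B *m adjmx A.
Proof. by rewrite !adjmxE trmx_mul map_mxM. Qed.

Lemma adjmx_tens m n p q (A : 'M[C]_(m, n)) (B : 'M[C]_(p, q)) :
  adjmx (A *t B) = adjmx A *t adjmx B.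
Proof. by rewrite !adjmxE trmx_tens map_mxT. Qed.

Lemma adjmx_delta m n (i : 'I_m) (j : 'I_n) :
  adjmx (delta_mx i j : 'M[C]_(m, n)) = delta_mx j i.
Proof. by apply/matrixP => a b; rewrite !mxE conjC_nat andbC. Qed.

Lemma psd_gram n p (F : 'M[C]_(n, p)) : psd (F *m adjmx F).
Proof.
split=> [|v]; first by rewrite adjmxM adjmxK.
suff -> : adjmx v *m (F *m adjmx F) *m v =
          adjmx (adjmx F *m v) *m (adjmx F *m v).
  by rewrite mxE; apply: sumr_ge0 => k _; rewrite !mxE mulrC -normCK exprn_ge0.
by rewrite adjmxM adjmxK !mulmxA.
Qed.

Lemma psd_congruence m n (M : 'M[C]_(m, n)) (A : 'M[C]_n) :
  psd A -> psd (M *m A *m adjmx M).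
Proof.
move=> [hA pA]; split=> [|v]; first by rewrite !adjmxM adjmxK hA mulmxA.
suff -> : adjmx v *m (M *m A *m adjmx M) *m v =
          adjmx (adjmx M *m v) *m A *m (adjmx M *m v) by apply: pA.
by rewrite adjmxM adjmxK !mulmxA.
Qed.

Lemma psd_diag_ge0 n (A : 'M[C]_n) i : psd A -> 0 <= A i i.
Proof.
move=> [_ /(_ (delta_mx i 0))].
by rewrite adjmx_delta -rowE -colE !mxE.
Qed.

Lemma psd_mxtrace_ge0 n (A : 'M[C]_n) : psd A -> 0 <= \tr A.
Proof. by move=> psdA; apply: sumr_ge0 => i _; apply: psd_diag_ge0. Qed.

Lemma psdP n (A : 'M[C]_n) : psd A <-> exists F : 'M[C]_n, A = F *m adjmx F.
Proof.
split=> [psdA|[F ->]]; last exact: psd_gram.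
have normalA : A \is normalmx.
  apply/hermitian_normalmx/is_hermitianmxP.
  by rewrite expr0 scale1r -adjmxE psdA.1.
have /orthomx_spectralP := normalA.
set P := spectralmx A; set D := spectral_diag A.
have unitaryP : P \is unitarymx by apply: spectral_unitarymx.
rewrite invmx_unitary // -adjmxE => eA.
have PPt : P *m adjmx P = 1%:M by rewrite adjmxE; apply/unitarymxP.
have D_ge0 i : 0 <= D 0 i.
  have -> : D 0 i = (P *m A *m adjmx P) i i.
    by rewrite eA !mulmxA PPt mul1mx -mulmxA PPt mulmx1 mxE eqxx mulr1n.
  exact/psd_diag_ge0/psd_congruence.
pose S := \row_i sqrtC (D 0 i).
have adjS : adjmx (diag_mx S) = diag_mx S.
  apply/matrixP => i j; rewrite !mxE eq_sym.
  by case: eqP => [->|_]; rewrite ?conjC0 // mulr1n geC0_conj ?sqrtC_ge0.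
exists (adjmx P *m diag_mx S).
rewrite adjmxM adjmxK adjS !mulmxA -(mulmxA (adjmx P)) mulmx_diag eA.
by congr (_ *m diag_mx _ *m _); apply/rowP => i; rewrite !mxE -expr2 sqrtCK.
Qed.

Lemma mxtrace_mul_psd_ge0 n (A B : 'M[C]_n) :
  psd A -> psd B -> 0 <= \tr (A *m B).
Proof.
move=> /psdP [F ->] psdB; rewrite -mulmxA mxtrace_mulC.
apply: psd_mxtrace_ge0; rewrite -[X in _ *m X](adjmxK F).
exact: psd_congruence.
Qed.

Lemma psd0 n : psd (0 : 'M[C]_n).
Proof. by rewrite -(mul0mx n (adjmx (0 : 'M[C]_n))); apply: psd_gram. Qed.

Lemma psdD n (A B : 'M[C]_n) : psd A -> psd B -> psd (A + B).
Proof.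
move=> [hA pA] [hB pB]; split=> [|v]; last by rewrite mulmxDr mulmxDl mxE addr_ge0.
by rewrite -[in RHS]hA -[in RHS]hB; apply/matrixP => i j; rewrite !mxE rmorphD.
Qed.

Lemma psd_sum I (r : seq I) (P : pred I) n (F : I -> 'M[C]_n) :
  (forall i, P i -> psd (F i)) -> psd (\sum_(i <- r | P i) F i).
Proof. by move=> psdF; apply: big_ind => //; [apply: psd0 | apply: psdD]. Qed.

Lemma psd_tens m n (A : 'M[C]_m) (B : 'M[C]_n) : psd A -> psd B -> psd (A *t B).
Proof.
move=> /psdP [F ->] /psdP [G ->].
by rewrite -tensmx_mul -adjmx_tens; apply: psd_gram.
Qed.

Lemma psd_kraus_apply d' d (K : seq 'M[C]_(d', d)) (A : 'M[C]_d) :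
  psd A -> psd (kraus_apply K A).
Proof. by move=> psdA; apply: psd_sum => M _; apply: psd_congruence. Qed.
End PositiveSemidefinite.

Section Kronecker.
Set Implicit Arguments.
Unset Strict Implicit.
Unset Printing Implicit Defensive.

Variable R : pzRingType.

Lemma tensmx_suml I (r : seq I) (P : pred I) m n p q
    (F : I -> 'M[R]_(m, n)) (B : 'M[R]_(p, q)) :
  \sum_(i <- r | P i) (F i *t B) = (\sum_(i <- r | P i) F i) *t B.
Proof.
apply/matrixP => i j; rewrite summxE [RHS]mxE summxE mulr_suml.
by apply: eq_bigr => k _; rewrite !mxE.
Qed.

Lemma tensmx_sumr I (r : seq I) (P : pred I) m n p q
    (A : 'M[R]_(m, n)) (F : I -> 'M[R]_(p, q)) :
  \sum_(i <- r | P i) (A *t F i) = A *t (\sum_(i <- r | P i) F i).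
Proof.
apply/matrixP => i j; rewrite summxE [RHS]mxE summxE mulr_sumr.
by apply: eq_bigr => k _; rewrite !mxE.
Qed.

Lemma tensmx11 m n : (1%:M : 'M[R]_m) *t (1%:M : 'M[R]_n) = 1%:M.
Proof.
apply/matrixP => i j.
case: (mxtens_indexP i) => i0 i1; case: (mxtens_indexP j) => j0 j1.
rewrite tensmxE !mxE -natrM mulnb (inj_eq (can_inj (@mxtens_indexK m n))).
by rewrite xpair_eqE.
Qed.

End Kronecker.

Lemma kraus_apply_sum (C : numClosedFieldType) d' d (K : seq 'M[C]_(d', d))
    I (r : seq I) (P : pred I) (F : I -> 'M[C]_d) :
  kraus_apply K (\sum_(i <- r | P i) F i) = \sum_(i <- r | P i) kraus_apply K (F i).
Proof.
rewrite /kraus_apply exchange_big; apply: eq_bigr => M _.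
by rewrite mulmx_sumr mulmx_suml.
Qed.

Lemma mulmx_inner0 (R : pzRingType) m n p (A : 'M[R]_(m, n)) (B : 'M[R]_(n, p)) :
  n = 0%N -> A *m B = 0.
Proof. by move=> n0; move: A B; rewrite n0 => A B; rewrite thinmx0 mul0mx. Qed.

Lemma mx1_eq0 (R : nzRingType) n : (1%:M : 'M[R]_n) = 0 -> n = 0%N.
Proof.
case: n => // n /matrixP /(_ ord0 ord0) /eqP.
by rewrite !mxE eqxx oner_eq0.
Qed.

Section Circuit.
Set Implicit Arguments.
Unset Strict Implicit.
Unset Printing Implicit Defensive.

Variables (C : numClosedFieldType) (N : nat) (Om : 'I_N -> finType).
Local Notation assign := (assignment Om).
Implicit Types (L : seq 'I_N) (x y z : assign).

Definition splice L y z : assign := [ffun k => if k \in L then y k else z k].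

Lemma spliceE L y z k : splice L y z k = if k \in L then y k else z k.
Proof. by rewrite ffunE. Qed.

(* Sums over the assignments of the variables of a subtree with leaves L are
   taken over the full assignments that agree with a fixed x0 off L. *)
Definition agree_off L x (x0 : assign) : bool :=
  [forall k, (k \notin L) ==> (x k == x0 k)].

Lemma agree_offP L x (x0 : assign) :
  reflect (forall k, k \notin L -> x k = x0 k) (agree_off L x x0).
Proof.
apply: (iffP forallP) => [H k kL | H k]; last by apply/implyP => kL; rewrite H.
by apply/eqP; move: (H k); rewrite kL.
Qed.

Lemma big_agree_off1 (V : nmodType) k (x0 : assign) (F : Om k -> V) :
  \sum_(x | agree_off [:: k] x x0) F (x k) = \sum_a F a.
Proof.
pose h (a : Om k) : assign := [ffun j => dfwith x0 a j].
rewrite (reindex_onto h (fun x : assign => x k)) /=; last first.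
  move=> x /agree_offP x_eq; apply/ffunP => j; rewrite ffunE.
  have [<-|kj] := eqVneq k j; first by rewrite dfwith_in.
  by rewrite dfwith_out // x_eq // mem_seq1 eq_sym.
apply: eq_big => [a|a _]; last by rewrite ffunE dfwith_in.
rewrite ffunE dfwith_in eqxx andbT; apply/agree_offP => j.
by rewrite mem_seq1 ffunE => jk; rewrite dfwith_out // eq_sym.
Qed.

Lemma big_agree_off_cat (V : nmodType) L1 L2 (x0 : assign) (G : assign -> V) :
  ~~ has (mem L1) L2 ->
  \sum_(x | agree_off (L1 ++ L2) x x0) G x =
  \sum_(y | agree_off L1 y x0) \sum_(z | agree_off L2 z x0) G (splice L1 y z).
Proof.
move=> L12; have L1_notin_L2 k : k \in L1 -> k \notin L2.
  by move=> kL1; apply: contraNN L12 => kL2; apply/hasP; exists k.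
rewrite pair_big_dep (reindex_onto (fun p => splice L1 p.1 p.2)
                        (fun x => (splice L1 x x0, splice L1 x0 x))) /=; last first.
  by move=> x _; apply/ffunP => k; rewrite !spliceE; case: (k \in L1).
apply: eq_bigl => -[y z] /=; apply/andP/andP => [[/agree_offP x0_off /eqP [ey ez]]|].
  split; [rewrite -ey | rewrite -ez]; apply/agree_offP => k kL; rewrite spliceE.
    by rewrite (negPf kL).
  by case: ifP => // kL1; rewrite x0_off // mem_cat kL1.
move=> [/agree_offP y_off /agree_offP z_off]; split.
  apply/agree_offP => k; rewrite mem_cat negb_or spliceE => /andP [kL1 kL2].
  by rewrite (negPf kL1) z_off.
apply/eqP; congr pair; apply/ffunP => k; rewrite !spliceE;
  have [kL1|kL1] := boolP (k \in L1) => //.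
  by rewrite y_off.
by rewrite z_off // L1_notin_L2.
Qed.

Lemma circuit_eval_local d (t : circuit C Om d) x y :
  (forall k, k \in leaves t -> x k = y k) -> circuit_eval t x = circuit_eval t y.
Proof.
elim: t => [d' k E|d' dl dr K l IHl r IHr] /= xy; first by rewrite xy ?mem_head.
by rewrite IHl ?IHr // => k kt; apply: xy; rewrite mem_cat kt ?orbT.
Qed.

Lemma circuit_eval_psd d (t : circuit C Om d) x :
  positive_unital t -> psd (circuit_eval t x).
Proof.
elim: t => [d' k E [psdE _]|d' dl dr K l IHl r IHr [_ [_ [pul pur]]]] //=.
by apply/psd_kraus_apply/psd_tens; [apply: IHl | apply: IHr].
Qed.

Lemma sum_circuit_eval_agree_off d (t : circuit C Om d) (x0 : assign) :
  positive_unital t -> uniq (leaves t) ->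
  \sum_(x | agree_off (leaves t) x x0) circuit_eval t x = 1%:M.
Proof.
elim: t => [d' k E [_ sumE] _|d' dl dr K l IHl r IHr] /=.
  by rewrite big_agree_off1.
move=> [_ [unitalK [pul pur]]]; rewrite cat_uniq => /and3P [ul lr ur].
have lr_disjoint k : k \in leaves l -> k \notin leaves r.
  by move=> kl; apply: contraNN lr => kr; apply/hasP; exists k.
rewrite big_agree_off_cat //.
rewrite (eq_bigr (fun y => kraus_apply K (circuit_eval l y *t 1%:M))).
  by rewrite -kraus_apply_sum tensmx_suml IHl // tensmx11.
move=> y _; rewrite -(IHr pur ur) -tensmx_sumr kraus_apply_sum.
apply: eq_bigr => z _ /=; congr (kraus_apply K (_ *t _)); apply: circuit_eval_local.
  by move=> k kl; rewrite spliceE kl.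
by move=> k kr; rewrite spliceE; case: ifP => // /lr_disjoint; rewrite kr.
Qed.

Lemma circuit_dim_eq0 d (t : circuit C Om d) k :
  positive_unital t -> k \in leaves t -> #|Om k| = 0%N -> d = 0%N.
Proof.
elim: t => [d' k' E [_ sumE]|d' dl dr K l IHl r IHr [_ [unitalK [pul pur]]]] /=.
  rewrite mem_seq1 => /eqP kk' Om0; subst k'; apply: (@mx1_eq0 C).
  by rewrite -sumE big_pred0 // => a; move: (card0_eq Om0 a).
rewrite mem_cat => /orP kt Om0; apply: (@mx1_eq0 C); rewrite -unitalK.
have dldr0 : (dl * dr = 0)%N.
  by case: kt => [/IHl -> | /IHr ->] //; rewrite ?muln0.
by apply: big1 => M _; apply: mulmx_inner0.
Qed.

Lemma sum_circuit_eval d (t : circuit C Om d) :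
  partition_circuit t -> positive_unital t -> \sum_x circuit_eval t x = 1%:M.
Proof.
move=> part pu; have in_leaves k : k \in leaves t by rewrite (perm_mem part) mem_enum.
have [inhabited|] := boolP [forall k, 0 < #|Om k|]%N.
  have x0_k k : exists a : Om k, a \in Om k by apply/card_gt0P/(forallP inhabited).
  pose x0 : assign := [ffun k => xchoose (x0_k k)].
  rewrite -(sum_circuit_eval_agree_off x0 pu); last first.
    by rewrite (perm_uniq part) enum_uniq.
  by apply: eq_bigl => x; apply/esym/agree_offP => k; rewrite in_leaves.
(* No base assignment exists, but then d = 0 and both sides are empty. *)
rewrite negb_forall => /existsP [k]; rewrite -eqn0Ngt => /eqP Om0.
have d0 := circuit_dim_eq0 pu (in_leaves k) Om0.
by apply/matrixP => i; have := ltn_ord i; rewrite {2}d0.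
Qed.
End Circuit.

Theorem theorem2 (R : realType) (N : nat) (Om : 'I_N -> finType) (d : nat)
  (O : circuit R[i] Om d) (rho : 'M[R[i]]_d) :
  partition_circuit O -> positive_unital O -> density rho ->
  (forall x : assignment Om, 0 <= \tr (circuit_eval O x *m rho)) /\
  \sum_(x : assignment Om) \tr (circuit_eval O x *m rho) = 1.
Proof.
move=> part pu [psd_rho tr_rho]; split=> [x|].
  exact/mxtrace_mul_psd_ge0/psd_rho/circuit_eval_psd.
by rewrite -tr_rho -raddf_sum -mulmx_suml sum_circuit_eval // mul1mx.
Qed.
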